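(* Let $\mathcal X$ be a GKM variety with a combinatorial moment graph as described in the context. Suppose that for each $T$-fixed point $v\in\mathcal X^T$ there exists at least one Knutson–Tao class $p^v\in H^*_T(\mathcal X)$. Then the classes $\{p^v: v\in\mathcal X^T\}$ form a basis of $H^*_T(\mathcal X)$ as a module over $\mathbb{C}[t_1,\ldots,t_n]$.
   Context: Let $T=(\mathbb{C}^* )^n$ and let $\mathcal X$ be a complex projective algebraic variety with an algebraic $T$-action having finitely many fixed points and finitely many one-dimensional orbits, and which is equivariantly formal (a GKM variety). The closure of each one-dimensional orbit $O$ contains exactly two fixed points $N_O,S_O$, and $T$ acts on the tangent line at $N_O$ by a weight $\alpha$ (a linear form in $t_1,\ldots,t_n$) and at $S_O$ by $-\alpha$. The moment graph has vertex set $\mathcal X^T$ and an edge between two fixed points for each one-dimensional orbit whose closure contains both. It is directed with no directed circuits, and each directed edge $v\to w$ is labeled $\alpha_{vw}$, the weight at $v$ of the corresponding orbit. Assume that for each $v$ the labels on the edges directed out of $v$ are pairwise linearly independent. By the GKM theorem, $H^*_T(\mathcal X)$ is the ring of tuples $(p_w)_{w\in\mathcal X^T}$, $p_w\in\mathbb{C}[t_1,\ldots,t_n]$, with $p_{N_O}-p_{S_O}\in\langle t_O\rangle$ for every one-dimensional orbit $O$ of weight $t_O$. Write $u\succeq_D u'$ if there is a directed path (possibly of length $0$) from $u$ to $u'$. A Knutson–Tao class for $v\in\mathcal X^T$ is a class $(p^v_w)_w\in H^*_T(\mathcal X)$ such that: (1) $p^v_v=\prod_{v\to w}\alpha_{vw}$,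 the product over all edges directed out of $v$; (2) each nonzero $p^v_w$ is homogeneous of degree $\deg p^v_v$; (3) $p^v_w=0$ whenever $w\not\succ_D v$, i.e. whenever $w\neq v$ and there is no directed path from $w$ to $v$. *)

From HB Require Import structures.
From mathcomp Require Import all_boot all_order all_algebra.
From mathcomp Require Import mpoly.
From mathcomp Require Import complex.
From mathcomp Require Import reals.
Set Implicit Arguments.
Unset Strict Implicit.
Unset Printing Implicit Defensive.
Import Order.TTheory GRing.Theory Num.Theory.
Local Open Scope ring_scope.

Section GKM.
Variables (R : realType) (n : nat).
Local Notation C := (Rcomplex R).
Local Notation P := {mpoly C[n]}.

(* A combinatorial moment graph: fixed points V (finite), one-dimensional
   orbits E (finite), each orbit e oriented as a directed edge src e -> tgt e
   with label alpha e = the weight at src e. *)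
Variables (V E : finType) (src tgt : E -> V) (alpha : E -> P).

Definition medge : rel V := fun v w => [exists e, (src e == v) && (tgt e == w)].

(* u >=_D u' : directed path (possibly of length 0) from u to u' *)
Definition dle (u u' : V) : bool := connect medge u u'.

Definition acyclic_mg : Prop := forall e : E, ~~ dle (tgt e) (src e).

Definition linear_form (a : P) : Prop := a != 0 /\ a \is 1.-homog for mdeg.

Definition lin_indep2 (a b : P) : Prop :=
  forall x y : C, x *: a + y *: b = 0 -> x = 0 /\ y = 0.

Definition out_indep : Prop :=
  forall e e' : E, e != e' -> src e = src e' -> lin_indep2 (alpha e) (alpha e').

Definition mdvd (a b : P) : Prop := exists c : P, b = c * a.

(* The GKM description of H_T^*(X): tuples (p_w)_w with
   alpha_O | p_{N_O} - p_{S_O} for each one-dimensional orbit O. *)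
Definition gkm_class (p : V -> P) : Prop :=
  forall e : E, mdvd (alpha e) (p (src e) - p (tgt e)).

Definition KT_class (v : V) (p : V -> P) : Prop :=
  [/\ gkm_class p,
      p v = \prod_(e | src e == v) alpha e,
      (exists d : nat, forall w, p w != 0 -> p w \is d.-homog for mdeg)
    & forall w, w != v -> ~~ dle w v -> p w = 0].

Definition is_basis (b : V -> V -> P) : Prop :=
  (forall v, gkm_class (b v)) /\
  (forall q, gkm_class q -> exists c : V -> P, forall w, q w = \sum_v c v * b v w) /\
  (forall c : V -> P, (forall w, \sum_v c v * b v w = 0) -> forall v, c v = 0).

End GKM.

From HB Require Import structures.
From mathcomp Require Import all_boot all_order all_algebra.
From mathcomp Require Import mpoly complex reals.
From mathcomp Require Import ring.
Set Implicit Arguments.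
Unset Strict Implicit.
Unset Printing Implicit Defensive.
Import GRing.Theory.
Local Open Scope ring_scope.

(* Order the fixed points by [depth w], the number of fixed points with a
   directed path to [w]; it increases strictly along every edge.  A
   Knutson-Tao class [p^v] is supported on [v] and on points of smaller depth,
   so the family is unitriangular and hence free.  For spanning, let [w] have
   the largest depth in the support of a class [q]: then [q] vanishes at the
   targets of the edges leaving [w], so every label [alpha_e] of such an edge
   divides [q w].  These labels are pairwise independent linear forms, hence
   pairwise non-associate primes, so their product [p^w w] divides [q w];
   subtracting multiples of the [p^w] shrinks the support of [q]. *)

Section LinearForms.
Variables (R : realType) (n : nat).
Local Notation C := (Rcomplex R).
Local Notation P := {mpoly C[n]}.
Implicit Types (a b f g : P).

Lemma mdvd0 a : mdvd a 0.
Proof. by exists 0; rewrite mul0r. Qed.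

Lemma mdvd_refl a : mdvd a a.
Proof. by exists 1; rewrite mul1r. Qed.

Lemma mdvdD a f g : mdvd a f -> mdvd a g -> mdvd a (f + g).
Proof. by move=> [c ->] [d ->]; exists (c + d); rewrite mulrDl. Qed.

Lemma mdvdB a f g : mdvd a f -> mdvd a g -> mdvd a (f - g).
Proof. by move=> [c ->] [d ->]; exists (c - d); rewrite mulrBl. Qed.

Lemma mdvdMl a f g : mdvd a f -> mdvd a (g * f).
Proof. by move=> [c ->]; exists (g * c); rewrite mulrA. Qed.

Lemma mdvdZ a f (c : C) : mdvd a f -> mdvd a (c *: f).
Proof. by rewrite -mul_mpolyC; apply: mdvdMl. Qed.

Lemma mdvd_sum a (I : Type) (r : seq I) (Q : pred I) (F : I -> P) :
  (forall i, Q i -> mdvd a (F i)) -> mdvd a (\sum_(i <- r | Q i) F i).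
Proof. by move=> aF; elim/big_ind: _ => //; [apply: mdvd0 | apply: mdvdD]. Qed.

Lemma mdvd_subM a x y x' y' :
  mdvd a (x - y) -> mdvd a (x' - y') -> mdvd a (x * x' - y * y').
Proof.
have -> : x * x' - y * y' = x * (x' - y') + y' * (x - y) by ring.
by move=> axy axy'; apply: mdvdD; apply: mdvdMl.
Qed.

Lemma mdvd_subX a x y k : mdvd a (x - y) -> mdvd a (x ^+ k - y ^+ k).
Proof.
move=> axy; elim: k => [|k IHk]; first by rewrite !expr0 subrr; apply: mdvd0.
by rewrite !exprS; apply: mdvd_subM.
Qed.

Lemma linear_form_coef a : linear_form a -> exists i : 'I_n, a@_U_(i) != 0.
Proof.
move=> [a_neq0 a_homog]; have lead_supp := mlead_supp a_neq0.
have /mdeg1P [i /eqP lead_i] : mdeg (mlead a) == 1%N.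
  by rewrite (dhomog_mf a_homog lead_supp).
by exists i; rewrite -lead_i -mcoeff_msupp.
Qed.

Lemma homog1_expand b : b \is 1.-homog for mdeg -> b = \sum_(i < n) b@_U_(i) *: 'X_i.
Proof.
move=> b_homog; apply/mpolyP => m; rewrite raddf_sum /=.
under eq_bigr do rewrite mcoeffZ mcoeffX.
have [/mdeg1P [j /eqP ->]|deg_m] := boolP (mdeg m == 1%N).
  rewrite (bigD1 j) //= eqxx mulr1 big1 ?addr0 // => i ij.
  case: eqP => [/mnmP /(_ j)|]; last by rewrite mulr0.
  by rewrite !mnm1E eqxx (negbTE ij).
rewrite (dhomog_nemf_coeff b_homog deg_m) big1 // => i _.
by case: eqP => [mi|]; [move: deg_m; rewrite -mi mdeg1 | rewrite mulr0].
Qed.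

(* [reduce a i] substitutes for ['X_i] its value on the hyperplane [a = 0];
   when [a@_U_(i) != 0] it is the quotient map onto [C[t]/(a)]. *)
Definition reduce_tuple a (i : 'I_n) : n.-tuple P :=
  [tuple if j == i then 'X_j - (a@_U_(i))^-1 *: a else 'X_j | j < n].

Definition reduce a i f : P := f \mPo reduce_tuple a i.

Lemma reduceM a i f g : reduce a i (f * g) = reduce a i f * reduce a i g.
Proof. exact: rmorphM. Qed.

Lemma reduce_homog1 a i b :
  b \is 1.-homog for mdeg -> reduce a i b = b - (b@_U_(i) / a@_U_(i)) *: a.
Proof.
move=> b_homog; rewrite {1}(homog1_expand b_homog) /reduce raddf_sum /=.
rewrite [X in _ = X - _](homog1_expand b_homog).
under eq_bigr do rewrite comp_mpolyZ comp_mpolyXU -tnth_nth tnth_mktuple.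
rewrite (bigD1 i) //= eqxx [in RHS](bigD1 i) //=.
rewrite (eq_bigr (fun j => b@_U_(j) *: 'X_j)) => [|j /negbTE -> //].
by rewrite scalerBr scalerA mulrC addrAC.
Qed.

Lemma mdvd_sub_reduce a i f : mdvd a (f - reduce a i f).
Proof.
rewrite -{1}[f]comp_mpoly_id /reduce !comp_mpolyE -sumrB.
apply: mdvd_sum => m _; rewrite -scalerBr; apply: mdvdZ.
apply: (big_ind2 (fun x y => mdvd a (x - y))) => [||j _].
- by rewrite subrr; apply: mdvd0.
- by move=> x1 x2 y1 y2; apply: mdvd_subM.
apply: mdvd_subX; rewrite tnth_map tnth_ord_tuple tnth_mktuple.
case: (j == i); last by rewrite subrr; apply: mdvd0.
by rewrite opprB addrC subrK; apply/mdvdZ/mdvd_refl.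
Qed.

Lemma reduce_eq0P a i f :
  linear_form a -> a@_U_(i) != 0 -> reduce a i f = 0 <-> mdvd a f.
Proof.
move=> [_ a_homog] ai_neq0; split=> [f0|[c ->]].
  by have := mdvd_sub_reduce a i f; rewrite f0 subr0.
by rewrite reduceM (reduce_homog1 _ _ a_homog) divff // scale1r subrr mulr0.
Qed.

Lemma linear_form_dvdM a b g : linear_form a -> linear_form b ->
  lin_indep2 a b -> mdvd a (b * g) -> mdvd a g.
Proof.
move=> la [_ b_homog] ab; have [i ai_neq0] := linear_form_coef la.
rewrite -!(reduce_eq0P _ la ai_neq0) reduceM reduce_homog1 // => /eqP.
rewrite mulf_eq0 subr_eq0 => /orP[/eqP b_prop|/eqP //].
have : (- (b@_U_(i) / a@_U_(i))) *: a + 1 *: b = 0.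
  by rewrite scale1r {2}b_prop scaleNr addNr.
by move=> /ab[_ /eqP]; rewrite oner_eq0.
Qed.

End LinearForms.

Lemma gkm_class_lincomb (R : realType) (n : nat) (V E : finType)
    (src tgt : E -> V) (alpha : E -> {mpoly (Rcomplex R)[n]})
    (q : V -> {mpoly (Rcomplex R)[n]}) (c : V -> {mpoly (Rcomplex R)[n]})
    (b : V -> V -> {mpoly (Rcomplex R)[n]}) :
  gkm_class src tgt alpha q -> (forall v, gkm_class src tgt alpha (b v)) ->
  gkm_class src tgt alpha (fun w => q w - \sum_v c v * b v w).
Proof.
move=> gq gb e /=.
have -> : forall x y s t : {mpoly (Rcomplex R)[n]},
    x - s - (y - t) = (x - y) - (s - t) by move=> *; ring.
apply: mdvdB; first exact: gq.
by rewrite -sumrB; apply: mdvd_sum => v _; rewrite -mulrBr; apply/mdvdMl/gb.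
Qed.

Section MomentGraph.
Variables (V E : finType) (src tgt : E -> V).
Hypothesis edge_neq : forall e, src e != tgt e.
Hypothesis acyclic : acyclic_mg src tgt.
Local Notation dle := (dle src tgt).

Definition depth (w : V) : nat := #|[pred u | dle u w]|.

Lemma dle_edge e : dle (src e) (tgt e).
Proof. by apply: connect1; apply/existsP; exists e; rewrite !eqxx. Qed.

Lemma dle_asym u w : dle u w -> u != w -> ~~ dle w u.
Proof.
move=> /connectP [[|x s] path_s last_s] uw; first by rewrite last_s eqxx in uw.
move: path_s => /= /andP [/existsP [e /andP [/eqP src_e /eqP tgt_e]] path_s].
apply: contra (acyclic e) => wu; rewrite src_e tgt_e.
by apply: connect_trans wu; apply/connectP; exists s.
Qed.

Lemma depth_lt u w : dle u w -> u != w -> (depth u < depth w)%N.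
Proof.
move=> uw u_neq_w; apply: proper_card; apply/properP; split.
  by apply/subsetP => x; rewrite !inE => /connect_trans; apply.
exists w; rewrite !inE; [exact: connect0 | exact: dle_asym uw u_neq_w].
Qed.

Lemma depth_edge e : (depth (src e) < depth (tgt e))%N.
Proof. exact: depth_lt (dle_edge e) (edge_neq e). Qed.

Lemma depth_le_card w : (depth w <= #|V|)%N.
Proof. exact: max_card. Qed.

Variables (R : realType) (n : nat) (alpha : E -> {mpoly (Rcomplex R)[n]}).
Local Notation P := {mpoly (Rcomplex R)[n]}.
Hypothesis alpha_linear : forall e, linear_form (alpha e).
Hypothesis alpha_indep : out_indep src alpha.

Lemma mdvd_prod_seq v (s : seq E) (f : P) : uniq s -> {in s, forall e, src e = v} ->
  {in s, forall e, mdvd (alpha e) f} -> mdvd (\prod_(e <- s) alpha e) f.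
Proof.
elim: s f => [|e s IHs] f; first by exists f; rewrite big_nil mulr1.
move=> /= /andP [e_notin_s s_uniq] src_es f_dvd.
have [g f_eq] := f_dvd e (mem_head e s).
have [d g_eq] : mdvd (\prod_(e' <- s) alpha e') g; last first.
  by exists d; rewrite f_eq g_eq big_cons mulrAC -mulrA.
apply: IHs => // [e' e's|e' e's]; first by apply: src_es; rewrite inE e's orbT.
have e'_neq_e : e' != e by apply: contraNneq e_notin_s => <-.
apply: linear_form_dvdM (alpha_linear e') (alpha_linear e) _ _.
  by apply: alpha_indep; rewrite // !src_es ?inE ?e's ?eqxx ?orbT.
by rewrite mulrC -f_eq; apply: f_dvd; rewrite inE e's orbT.
Qed.

Lemma mdvd_prod_out v (f : P) : (forall e, src e = v -> mdvd (alpha e) f) ->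
  mdvd (\prod_(e | src e == v) alpha e) f.
Proof.
move=> f_dvd; rewrite -big_filter.
apply: (@mdvd_prod_seq v); first by rewrite filter_uniq ?index_enum_uniq.
  by move=> e; rewrite mem_filter => /andP[/eqP].
by move=> e; rewrite mem_filter => /andP[/eqP /f_dvd].
Qed.

Variable p : V -> V -> P.
Hypothesis p_KT : forall v, KT_class src tgt alpha v (p v).

Lemma KT_gkm v : gkm_class src tgt alpha (p v).
Proof. by case: (p_KT v). Qed.

Lemma KT_diag v : p v v = \prod_(e | src e == v) alpha e.
Proof. by case: (p_KT v). Qed.

Lemma KT_diag_neq0 v : p v v != 0.
Proof. by rewrite KT_diag; apply/prodf_neq0 => e _; case: (alpha_linear e). Qed.

Lemma KT_support v w : p v w != 0 -> w != v -> (depth w < depth v)%N.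
Proof.
move=> pw_neq0 w_neq_v; case: (p_KT v) => _ _ _ p_vanish.
have w_le_v : dle w v by apply: contraNT pw_neq0 => /(p_vanish _ w_neq_v) ->.
exact: depth_lt w_le_v w_neq_v.
Qed.

Lemma KT_free (c : V -> P) : (forall w, \sum_v c v * p v w = 0) -> forall v, c v = 0.
Proof.
move=> c_rel v0; apply/eqP; apply: contraT => cv0_neq0.
have [v cv_neq0 v_max] := arg_maxnP depth (P := fun u => c u != 0) cv0_neq0.
have := c_rel v; rewrite (bigD1 v) //= big1 ?addr0 => [/eqP|u u_neq_v].
  by rewrite mulf_eq0 (negbTE cv_neq0) (negbTE (KT_diag_neq0 v)).
have [->|cu_neq0] := eqVneq (c u) 0; first by rewrite mul0r.
have [->|puv_neq0] := eqVneq (p u v) 0; first by rewrite mulr0.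
have v_neq_u : v != u by rewrite eq_sym.
by have := v_max u cu_neq0; rewrite /= leqNgt (KT_support puv_neq0 v_neq_u).
Qed.

Lemma KT_span_depth k (q : V -> P) : gkm_class src tgt alpha q ->
  (forall w, q w != 0 -> (depth w < k)%N) ->
  exists c : V -> P, forall w, q w = \sum_v c v * p v w.
Proof.
elim: k q => [|k IHk] q q_gkm q_supp.
  exists (fun=> 0) => w; rewrite big1 => [|v _]; last by rewrite mul0r.
  by apply/eqP; apply: contraT => /q_supp.
have top_dvd w : exists c : P, depth w = k -> q w = c * p w w.
  have [w_top|w_not_top] := eqVneq (depth w) k; last first.
    by exists 0 => /eqP; rewrite (negbTE w_not_top).
  have [c ->] : mdvd (p w w) (q w); last by exists c.
  rewrite KT_diag; apply: mdvd_prod_out => e src_e.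
  have q_tgt : q (tgt e) = 0.
    apply/eqP; apply: contraT => /q_supp; have := depth_edge e.
    by rewrite src_e w_top ltnS ltnNge => /negPf ->.
  by have := q_gkm e; rewrite src_e q_tgt subr0.
have [cf cf_spec] := fin_all_exists top_dvd.
pose c0 v := if depth v == k then cf v else 0.
have c0_exact w : (k <= depth w)%N -> \sum_v c0 v * p v w = q w.
  move=> w_high; rewrite (bigD1 w) //= big1 ?addr0 => [|v v_neq_w]; last first.
    rewrite /c0; case: eqP => [v_top|]; last by rewrite mul0r.
    have [->|pvw_neq0] := eqVneq (p v w) 0; first by rewrite mulr0.
    have w_neq_v : w != v by rewrite eq_sym.
    by have := KT_support pvw_neq0 w_neq_v; rewrite v_top ltnNge w_high.
  rewrite /c0; case: eqP => [/cf_spec <- //|w_not_top]; rewrite mul0r.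
  apply/esym/eqP; apply: contraT => /q_supp; rewrite ltnS => w_low.
  by case: w_not_top; apply/eqP; rewrite eqn_leq w_low.
have [|c' c'_spec] := IHk _ (gkm_class_lincomb c0 q_gkm KT_gkm).
  move=> w /=; apply: contraR; rewrite -leqNgt => w_high.
  by rewrite c0_exact // subrr.
exists (fun v => c' v + c0 v) => w.
rewrite -[q w](subrK (\sum_v c0 v * p v w)) c'_spec -big_split /=.
by apply: eq_bigr => v _; rewrite mulrDl.
Qed.

End MomentGraph.

Theorem mainTheorem2 (R : realType) (n : nat) (V E : finType)
    (src tgt : E -> V) (alpha : E -> {mpoly (Rcomplex R)[n]}) :
  (forall e, src e != tgt e) ->
  (forall e, linear_form (alpha e)) ->
  acyclic_mg src tgt ->
  out_indep src alpha ->
  forall p : V -> V -> {mpoly (Rcomplex R)[n]},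
    (forall v, KT_class src tgt alpha v (p v)) ->
    is_basis src tgt alpha p.
Proof.
move=> edge_neq alpha_linear acyclic alpha_indep p p_KT.
split; first exact: KT_gkm.
split; last exact: KT_free.
move=> q q_gkm.
apply: (KT_span_depth edge_neq acyclic alpha_linear alpha_indep p_KT) q_gkm _.
by move=> w _; rewrite (leq_ltn_trans (depth_le_card src tgt w)).
Qed.
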